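(* Let $F\colon\{0,1\}^n\to\{0,1\}^m$. Then $H(X\mid F(X))=\max_A H(A(X;R)\mid X)$, where the maximum is over all (computationally unbounded) $F$-collision-finders $A$, $X$ is uniform on $\{0,1\}^n$, and $R$ is uniformly random coin tosses for $A$.
   Context: An $F$-collision-finder is a randomized algorithm $A$ such that for every $x\in\{0,1\}^n$ and every coin tosses $r$, $A(x;r)\in F^{-1}(F(x))$. $H(\cdot\mid\cdot)$ is conditional Shannon entropy. *)

From HB Require Import structures.
From mathcomp Require Import all_boot all_order all_algebra.
From mathcomp Require Import all_classical all_reals exp.
Set Implicit Arguments. Unset Strict Implicit. Unset Printing Implicit Defensive.
Import Order.TTheory GRing.Theory Num.Theory.
Local Open Scope ring_scope.

Definition bits (n : nat) : finType := (n.-tuple bool : finType).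

Definition log2 {R : realType} (x : R) : R := ln x / ln 2.

(* Random variables Y : Om -> TY, Z : Om -> TZ on a finite sample space Om
   with the UNIFORM distribution. *)
Definition pjoint {R : realType} {Om TY TZ : finType}
  (Y : Om -> TY) (Z : Om -> TZ) (y : TY) (z : TZ) : R :=
  #|[set w : Om | (Y w == y) && (Z w == z)]|%:R / #|Om|%:R.

Definition pmarg {R : realType} {Om TZ : finType} (Z : Om -> TZ) (z : TZ) : R :=
  #|[set w : Om | Z w == z]|%:R / #|Om|%:R.

Definition cond_entropy (R : realType) {Om TY TZ : finType}
  (Y : Om -> TY) (Z : Om -> TZ) : R :=
  \sum_(y : TY) \sum_(z : TZ)
    (let p := pjoint (R:=R) Y Z y z in
     if p == 0 then 0 else p * log2 (pmarg (R:=R) Z z / p)).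

Definition collision_finder {n m : nat} {C : finType}
  (F : bits n -> bits m) (A : bits n -> C -> bits n) : Prop :=
  forall (x : bits n) (r : C), F (A x r) = F x.

(* H(A(X;R) | X) with X uniform on {0,1}^n and R uniform on C, independent. *)
Definition cf_entropy (R : realType) {n : nat} {C : finType}
  (A : bits n -> C -> bits n) : R :=
  cond_entropy R (fun w : bits n * C => A w.1 w.2) (fun w : bits n * C => w.1).

From HB Require Import structures.
From mathcomp Require Import all_boot all_order all_algebra.
From mathcomp Require Import all_classical all_reals exp.
From mathcomp Require Import zify.
Import Order.TTheory GRing.Theory Num.Theory.
Set Implicit Arguments. Unset Strict Implicit. Unset Printing Implicit Defensive.
Local Open Scope ring_scope.

(* Conditioned on X = x, a collision-finder's output A(x;R) lies in the fiber
   F^-1(F(x)), so by Gibbs' inequality its entropy is at most log2 of the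
   fiber size, and H(X | F(X)) is exactly the average of these logarithms.
   The bound is attained by the collision-finder that outputs a uniform
   element of the fiber: with coins uniform on 'I_(2^n)!, the residue of the
   coin modulo a fiber size is exactly uniform, as every fiber size divides
   (2^n)!. *)

Lemma card_ord_modn_eq (M s i : nat) : (s %| M)%N -> (i < s)%N ->
  #|[set r : 'I_M | (r %% s == i)%N]| = (M %/ s)%N.
Proof.
move=> s_dvd_M i_lt_s; have s_gt0 : (0 < s)%N by apply: leq_ltn_trans i_lt_s.
have M_eq : M = (M %/ s * s)%N by rewrite divnK.
have lift_lt (k : 'I_(M %/ s)) : (i + k * s < M)%N.
  by rewrite [X in (_ < X)%N]M_eq; have := ltn_ord k; nia.
have -> : [set r : 'I_M | (r %% s == i)%N] =
          [set Ordinal (lift_lt k) | k : 'I_(M %/ s)].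
  apply/setP => r; rewrite inE; apply/eqP/imsetP => [r_mod | [k _ ->] /=].
    have r_div_lt : (r %/ s < M %/ s)%N by rewrite ltn_divLR // -M_eq.
    exists (Ordinal r_div_lt) => //; apply: val_inj => /=.
    by rewrite {1}(divn_eq r s) r_mod addnC.
  by rewrite addnC modnMDl modn_small.
rewrite card_imset ?card_ord // => k1 k2 /(congr1 val) /= /eqP.
by rewrite eqn_add2l eqn_pmul2r // => /eqP /val_inj.
Qed.

Section SliceEntropy.
Variable R : realType.

Lemma ln_le_subr1 (t : R) : 0 < t -> ln t <= t - 1.
Proof.
move=> t_gt0; have := @le_ln1Dx R (t - 1).
by rewrite addrCA subrr addr0; apply; rewrite ltrBrDl addrN.
Qed.

Definition entropy_term (p q : R) : R :=
  if p == 0 then 0 else p * log2 (q / p).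

(* The tangent bound ln t <= t - 1 at t = q / (p s); summing it over a
   support of size s gives Gibbs' inequality. *)
Lemma entropy_term_le (p q s : R) : 0 <= p -> p <= q -> 0 < s ->
  entropy_term p q <= (p * ln s + q / s - p) / ln 2.
Proof.
move=> p_ge0 p_le_q s_gt0; have ln2_gt0 : 0 < ln (2 : R) by rewrite ln_gt0 ?ltr1n.
rewrite /entropy_term; case: eqP => [->|/eqP p_neq0].
  rewrite mul0r subr0 add0r !divr_ge0 ?(ltW s_gt0) ?(ltW ln2_gt0) //.
  exact: le_trans p_ge0 p_le_q.
have p_gt0 : 0 < p by rewrite lt_def p_neq0.
have qps_gt0 : 0 < q / (p * s).
  by rewrite divr_gt0 ?mulr_gt0 //; apply: lt_le_trans p_le_q.
rewrite /log2 mulrA ler_pM2r ?invr_gt0 //.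
have -> : q / p = q / (p * s) * s by rewrite invfM mulrA mulfVK ?gt_eqF.
have -> : p * ln s + q / s - p = p * ln s + p * (q / (p * s) - 1).
  by rewrite mulrBr mulr1 invfM mulrCA mulVKf ?gt_eqF // addrA.
by rewrite lnM ?posrE // mulrDr addrC lerD2l ler_pM2l // ln_le_subr1.
Qed.

Variables (Om TY TZ : finType) (Y : Om -> TY) (Z : Om -> TZ).

(* P(Z = z) H(Y | Z = z) *)
Definition slice_entropy (z : TZ) : R :=
  \sum_y entropy_term (pjoint Y Z y z) (pmarg Z z).

Lemma cond_entropy_slices : cond_entropy R Y Z = \sum_z slice_entropy z.
Proof. exact: exchange_big. Qed.

Lemma pjoint_ge0 y z : 0 <= pjoint (R:=R) Y Z y z.
Proof. by rewrite divr_ge0. Qed.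

Lemma sum_pjoint z : \sum_y pjoint (R:=R) Y Z y z = pmarg Z z.
Proof.
rewrite -mulr_suml -natr_sum; congr (_%:R / _).
rewrite -sum1dep_card (partition_big Y xpredT) //=.
apply: eq_bigr => y _; rewrite -sum1dep_card; apply: eq_bigl => w.
by rewrite andbC.
Qed.

Lemma slice_entropy_le_log_card z (S : {set TY}) : (0 < #|S|)%N ->
  (forall y, y \notin S -> pjoint (R:=R) Y Z y z = 0) ->
  slice_entropy z <= pmarg Z z * log2 (#|S|%:R : R).
Proof.
move=> S_gt0 supp_S; set q := pmarg Z z; set s : R := #|S|%:R.
have s_gt0 : 0 < s by rewrite ltr0n.
have sum_S : \sum_(y in S) pjoint (R:=R) Y Z y z = q.
  rewrite /q -sum_pjoint [RHS](bigID (mem S)) /= [X in _ + X]big1 ?addr0 //.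
apply: (@le_trans _ _ (\sum_(y in S)
    (pjoint Y Z y z * ln s + q / s - pjoint Y Z y z) / ln 2)).
  rewrite /slice_entropy [X in X <= _](bigID (mem S)) /=.
  rewrite [X in _ + X]big1 ?addr0 => [|y /supp_S ->]; last by rewrite /entropy_term eqxx.
  apply: ler_sum => y y_in_S; apply: entropy_term_le; rewrite ?pjoint_ge0 //.
  rewrite -/q -sum_S (bigD1 y) //= lerDl sumr_ge0 // => *; exact: pjoint_ge0.
rewrite -mulr_suml !big_split /= -mulr_suml sumrN sum_S sumr_const.
by rewrite -[_ *+ #|S|]mulr_natr -/s mulfVK ?gt_eqF // addrK mulrA.
Qed.

Lemma slice_entropy_uniform z (S : {set TY}) : (0 < #|S|)%N -> 0 < pmarg (R:=R) Z z ->
  (forall y, pjoint (R:=R) Y Z y z = if y \in S then pmarg Z z / #|S|%:R else 0) ->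
  slice_entropy z = pmarg Z z * log2 (#|S|%:R : R).
Proof.
move=> S_gt0 q_gt0 pjoint_unif; set q := pmarg Z z; set s : R := #|S|%:R.
have qs_gt0 : 0 < q / s by rewrite divr_gt0 ?ltr0n.
rewrite /slice_entropy (eq_bigr (fun y => if y \in S then q / s * log2 s else 0)).
  by rewrite -big_mkcond sumr_const -mulr_natr mulrAC mulfVK ?pnatr_eq0 -?lt0n.
move=> y _; rewrite pjoint_unif /entropy_term -/q -/s.
case: (y \in S); last by rewrite eqxx.
by rewrite (gt_eqF qs_gt0) invf_div [q * (s / q)]mulrC divfK ?gt_eqF.
Qed.

End SliceEntropy.

Section CollisionFinders.
Variables (R : realType) (T U : finType) (F : T -> U).

Definition fiber (x : T) : {set T} := [set y | F y == F x].

Lemma card_fiber_gt0 x : (0 < #|fiber x|)%N.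
Proof. by apply/card_gt0P; exists x; rewrite inE. Qed.

Lemma cond_entropy_id_fun :
  cond_entropy R id F = \sum_x #|T|%:R^-1 * log2 (#|fiber x|%:R : R).
Proof.
apply: eq_bigr => x _; have card_T_neq0 : #|T|%:R != 0 :> R.
  by rewrite pnatr_eq0 -lt0n; apply/card_gt0P; exists x.
rewrite (bigD1 (F x)) //= big1 => [|u u_neq].
  rewrite addr0 /pjoint /pmarg (eq_card (B := [set x])) => [|w].
    by rewrite cards1 mul1r /entropy_term (negbTE (invr_neq0 card_T_neq0)) invrK mulfVK.
  by rewrite !inE andb_idr // => /eqP ->.
rewrite /pjoint eq_card0 ?mul0r ?eqxx // => w; rewrite !inE.
by apply/negbTE/andP => -[/eqP -> /eqP Fx]; rewrite Fx eqxx in u_neq.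
Qed.

Variable C : finType.
Hypothesis C_gt0 : (0 < #|C|)%N.

Lemma pmarg_fst x : pmarg (R:=R) (fun w : T * C => w.1) x = #|T|%:R^-1.
Proof.
rewrite /pmarg (eq_card (B := finset.setX [set x] [set: C])) => [|[a r]]; last first.
  by rewrite !inE andbT.
rewrite cardsX cards1 cardsT mul1n card_prod natrM invfM mulrCA mulfV ?mulr1 //.
by rewrite pnatr_eq0 -lt0n.
Qed.

Variable A : T -> C -> T.
Hypothesis A_collides : forall x r, F (A x r) = F x.

Lemma pjoint_collision_finder_out x y : y \notin fiber x ->
  pjoint (R:=R) (fun w : T * C => A w.1 w.2) (fun w => w.1) y x = 0.
Proof.
move=> y_out; rewrite /pjoint eq_card0 ?mul0r // => -[a r]; rewrite !inE /=.
apply/negbTE/andP => -[/eqP A_y /eqP a_x].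
by rewrite inE -A_y a_x A_collides eqxx in y_out.
Qed.

Lemma cond_entropy_collision_finder_le :
  cond_entropy R (fun w : T * C => A w.1 w.2) (fun w => w.1) <= cond_entropy R id F.
Proof.
rewrite cond_entropy_slices cond_entropy_id_fun; apply: ler_sum => x _.
rewrite -(pmarg_fst x); apply: slice_entropy_le_log_card; first exact: card_fiber_gt0.
exact: pjoint_collision_finder_out.
Qed.

End CollisionFinders.

Section UniformFiberSampler.
Variables (R : realType) (T U : finType) (F : T -> U).

Let coins := 'I_((#|T|)`!).

Definition fiber_sampler (x : T) (r : coins) : T :=
  nth x (enum (fiber F x)) (r %% #|fiber F x|)%N.

Lemma fiber_sampler_collides x r : F (fiber_sampler x r) = F x.
Proof.
have : fiber_sampler x r \in fiber F x.
  by rewrite -mem_enum mem_nth // -cardE ltn_pmod // card_fiber_gt0.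
by rewrite inE => /eqP.
Qed.

Lemma card_coins_gt0 : (0 < #|coins|)%N.
Proof. by rewrite card_ord fact_gt0. Qed.

Lemma card_fiber_dvd_fact x : (#|fiber F x| %| (#|T|)`!)%N.
Proof. by rewrite dvdn_fact // card_fiber_gt0 max_card. Qed.

Lemma pjoint_fiber_sampler x y :
  pjoint (R:=R) (fun w : T * coins => fiber_sampler w.1 w.2) (fun w => w.1) y x =
  if y \in fiber F x then pmarg (fun w : T * coins => w.1) x / #|fiber F x|%:R else 0.
Proof.
case: ifP => y_in; last first.
  by apply: pjoint_collision_finder_out; [exact: fiber_sampler_collides | rewrite y_in].
rewrite (pmarg_fst R card_coins_gt0 x) /pjoint.
set e := enum (fiber F x); set s := #|fiber F x|.
have y_in_e : y \in e by rewrite mem_enum.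
have size_e : size e = s by rewrite /e /s cardE.
have s_gt0 : (0 < s)%N by apply: card_fiber_gt0.
have index_lt : (index y e < s)%N by rewrite -size_e index_mem.
rewrite (eq_card (B := finset.setX [set x] [set r : coins | (r %% s == index y e)%N]))
  => [|[a r]].
  rewrite cardsX cards1 mul1n card_ord_modn_eq ?card_fiber_dvd_fact //.
  have fact_eq : ((#|T|)`! = (#|T|)`! %/ s * s)%N by rewrite divnK ?card_fiber_dvd_fact.
  have quot_neq0 : ((#|T|)`! %/ s)%:R != 0 :> R.
    by rewrite pnatr_eq0 -lt0n divn_gt0 // dvdn_leq ?fact_gt0 ?card_fiber_dvd_fact.
  by rewrite card_prod card_ord [in (_ * _)%N]fact_eq !natrM !invfM mulrCA mulVKf.
rewrite !inE /=; case: (eqVneq a x) => [->|]; rewrite ?andbF // andbT.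
rewrite /fiber_sampler -/e -/s -{1}(nth_index x y_in_e).
by rewrite nth_uniq ?enum_uniq ?size_e ?ltn_pmod.
Qed.

Lemma cond_entropy_fiber_sampler :
  cond_entropy R (fun w : T * coins => fiber_sampler w.1 w.2) (fun w => w.1) =
  cond_entropy R id F.
Proof.
rewrite cond_entropy_slices cond_entropy_id_fun; apply: eq_bigr => x _.
rewrite -(pmarg_fst R card_coins_gt0 x); apply: slice_entropy_uniform.
- exact: card_fiber_gt0.
- by rewrite (pmarg_fst R card_coins_gt0 x) invr_gt0 ltr0n; apply/card_gt0P; exists x.
- exact: pjoint_fiber_sampler.
Qed.

End UniformFiberSampler.

Theorem proposition3p4 (R : realType) (n m : nat) (F : bits n -> bits m) :
  (forall (C : finType) (A : bits n -> C -> bits n),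
      (0 < #|C|)%N -> collision_finder F A ->
      cf_entropy R A <= cond_entropy R (fun x : bits n => x) F)
  /\
  (exists (C : finType) (A : bits n -> C -> bits n),
      [/\ (0 < #|C|)%N, collision_finder F A &
          cf_entropy R A = cond_entropy R (fun x : bits n => x) F]).
Proof.
split=> [C A C_gt0 A_cf|].
  exact: (cond_entropy_collision_finder_le R C_gt0 A_cf).
exists 'I_((#|bits n|)`!), (fiber_sampler F); split.
- exact: (card_coins_gt0 (bits n)).
- exact: (fiber_sampler_collides F).
- exact: (cond_entropy_fiber_sampler R F).
Qed.
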